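(* Let $T$ be a string of length $n$ and $1<i\le j\le n$. For any interval $[s,t]$ with $i\le s\le t\le j$, we have $[s,t]\notin\mathsf{MUS}(T[i-1..j])$ and $[s,t]\in\mathsf{MUS}(T[i..j])$ if and only if $T[s..t]=\mathit{sqp}_{i-1,j}$ (as strings) and $\#\mathit{occ}_{T[i-1..j]}(\mathit{sqp}_{i-1,j})=2$.
   Context: $T[a..b]$ denotes the substring of $T$ from position $a$ to $b$. For strings $S,w$, $\#\mathit{occ}_S(w)$ is the number of positions at which $w$ occurs in $S$, with $\#\mathit{occ}_S(\varepsilon)=|S|+1$. A substring $w$ of $S$ is unique in $S$ if $\#\mathit{occ}_S(w)=1$ and repeating if $\#\mathit{occ}_S(w)\ge 2$. For $1\le i\le j\le n$, $\mathsf{MUS}(T[i..j])$ is the set of intervals $[s,t]$ (positions in $T$) with $i\le s\le t\le j$ such that $T[s..t]$ is unique in $T[i..j]$ and every proper substring of $T[s..t]$ (including the empty string) is repeating in $T[i..j]$. $\mathit{sqp}_{i,j}$ is the shortest (non-empty) prefix of $T[i..j]$ that occurs at most twice in $T[i..j]$. *)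

From mathcomp Require Import all_boot.
Set Implicit Arguments. Unset Strict Implicit. Unset Printing Implicit Defensive.

(* T[a..b] with 1-based positions: the characters at positions a, a+1, ..., b.
   (Empty when b < a.) *)
Definition substr (A : eqType) (T : seq A) (a b : nat) : seq A :=
  take (b.+1 - a) (drop a.-1 T).

(* #occ_S(w): number of start positions p (0-based, 0 <= p <= |S|-|w|)
   at which w occurs in S.  For w = [::] this is |S|+1. *)
Definition occ (A : eqType) (S w : seq A) : nat :=
  count (fun p => take (size w) (drop p S) == w) (iota 0 (size S - size w).+1).

Definition isMUS (A : eqType) (T : seq A) (i j s t : nat) : Prop :=
  [/\ i <= s, s <= t, t <= j,
      occ (substr T i j) (substr T s t) = 1 &
      forall u : seq A, infix u (substr T s t) -> size u < size (substr T s t) ->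
        2 <= occ (substr T i j) u].

(* sqp_{i,j}: the shortest non-empty prefix of T[i..j] occurring at most twice
   in T[i..j]  (take k.+1 S for the least k with occ S (take k.+1 S) <= 2). *)
Definition sqp (A : eqType) (T : seq A) (i j : nat) : seq A :=
  let S := substr T i j in
  take (find (fun k => occ S (take k.+1 S) <= 2) (iota 0 (size S))).+1 S.

From mathcomp Require Import all_boot zify.
Set Implicit Arguments. Unset Strict Implicit. Unset Printing Implicit Defensive.

(* Write T[i-1..j] = a :: S with S = T[i..j]; every occurrence in S is one in
   a :: S, shifted by one.  A MUS w of S can therefore fail to be a MUS of a :: S
   only by losing uniqueness: w is a prefix of a :: S occurring exactly twice.
   Its shorter non-empty prefixes are repeating in S and are prefixes of a :: S,
   so they occur at least three times, and w is the shortest prefix occurring at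
   most twice.  Conversely, if that prefix occurs exactly twice in a :: S, it is
   unique in S.  A shorter non-empty infix u of it is repeating in S: if u is a
   prefix, it occurs at least three times in a :: S by minimality; otherwise it
   occurs in S both inside the copy at the start of a :: S and inside the copy
   in S. *)

Lemma find_iota0 (P : pred nat) m k :
  k < m -> P k -> (forall l, l < k -> ~~ P l) -> find P (iota 0 m) = k.
Proof.
move=> lt_km Pk minP; apply/eqP; rewrite eqn_leq; apply/andP; split.
  rewrite leqNgt; apply/negP => /(before_find 0).
  by rewrite nth_iota // Pk.
rewrite leqNgt; apply/negP => lt_fk.
have has_P : has P (iota 0 m) by apply/hasP; exists k; rewrite ?mem_iota.
have lt_fm : find P (iota 0 m) < m by rewrite -{2}(size_iota 0 m) -has_find.
by have := nth_find 0 has_P; rewrite nth_iota // add0n (negbTE (minP _ lt_fk)).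
Qed.

Lemma before_find_iota0 (P : pred nat) m k : k < find P (iota 0 m) -> ~~ P k.
Proof.
move=> lt_kf; have lt_km : k < m.
  by apply: leq_trans lt_kf _; rewrite -{2}(size_iota 0 m) find_size.
by have := before_find 0 lt_kf; rewrite nth_iota // add0n => ->.
Qed.

Section Strings.
Variable A : eqType.
Implicit Types S T X u w x y : seq A.

Lemma occ_cons a S u : occ (a :: S) u = prefix u (a :: S) + occ S u.
Proof.
rewrite prefixE /occ /=; case: (leqP (size u) (size S)) => [le_uS | lt_Su].
  by rewrite subSn // [iota 1 _.+1](iotaDl 1 0) count_map.
have -> : (size S).+1 - size u = 0 by lia.
have -> : size S - size u = 0 by lia.
rewrite drop0; suff /negbTE-> : take (size u) S != u by [].
by apply: contraTneq lt_Su => <-; rewrite -leqNgt size_take_min geq_minr.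
Qed.

Lemma occ_nil S : occ S [::] = (size S).+1.
Proof.
rewrite /occ subn0 (eq_count (a2 := predT)) ?count_predT ?size_iota //.
by move=> p; rewrite /= take0.
Qed.

Lemma occ_gt0P S u : 0 < occ S u -> exists p, prefix u (drop p S).
Proof. by rewrite /occ -has_count => /hasP [p _ occ_p]; exists p; rewrite prefixE. Qed.

Lemma occ_ge2 S u p q : 0 < size u ->
  prefix u (drop p S) -> prefix u (drop q S) -> p != q -> 2 <= occ S u.
Proof.
move=> u_gt0 occ_p occ_q neq_pq.
have occ_range r : prefix u (drop r S) -> r \in iota 0 (size S - size u).+1.
  move/size_prefix; rewrite size_drop mem_iota add0n; lia.
rewrite /occ -size_filter; apply: (uniq_leq_size (s1 := [:: p; q])).
  by rewrite /= inE neq_pq.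
move=> r; rewrite !inE mem_filter -prefixE.
by case/orP=> /eqP->; rewrite ?occ_p ?occ_q occ_range.
Qed.

Lemma prefix_drop_cat S x u y p :
  prefix (x ++ u ++ y) (drop p S) -> prefix u (drop (p + size x) S).
Proof.
case/prefixP=> z Ez; apply/prefixP; exists (y ++ z).
by rewrite addnC -drop_drop Ez -!catA drop_size_cat.
Qed.

Definition rare_prefix X k := occ X (take k.+1 X) <= 2.

Definition sqp_of X := take (find (rare_prefix X) (iota 0 (size X))).+1 X.

Lemma sqpE T i j : sqp T i j = sqp_of (substr T i j).
Proof. by []. Qed.

Lemma sqp_of_prefix X : prefix (sqp_of X) X.
Proof. exact: prefix_take. Qed.

Lemma sqp_of_min X k : 0 < k < size (sqp_of X) -> 2 < occ X (take k X).
Proof.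
case: k => // k /andP[_]; rewrite size_take_min leq_min ltnS => /andP[lt_kf _].
by rewrite ltnNge; apply: before_find_iota0 lt_kf.
Qed.

Lemma sqp_of_eq X w : 0 < size w -> prefix w X -> occ X w <= 2 ->
  (forall k, 0 < k < size w -> 2 < occ X (take k X)) -> sqp_of X = w.
Proof.
case: w => // c w' _; set w := c :: w' => pre_w rare_w min_w.
have def_w : take (size w) X = w by apply/eqP; rewrite -prefixE.
rewrite /sqp_of (@find_iota0 _ _ (size w')) /rare_prefix ?def_w //.
  exact: size_prefix pre_w.
by move=> l lt_l; rewrite -ltnNge min_w.
Qed.

Definition mus X w : Prop :=
  occ X w = 1 /\ forall u, infix u w -> size u < size w -> 2 <= occ X u.

Lemma isMUSE T i j s t : i <= s -> s <= t -> t <= j ->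
  isMUS T i j s t <-> mus (substr T i j) (substr T s t).
Proof. by move=> *; split=> [[]|[]]. Qed.

Section ExtendLeft.
Variables (a : A) (S : seq A).
Hypothesis S_gt0 : 0 < size S.

Lemma not_mus_cons w :
  mus S w -> ~ mus (a :: S) w -> prefix w (a :: S) /\ occ (a :: S) w = 2.
Proof.
case=> occ1 minS not_mus.
have pre : prefix w (a :: S).
  apply: contra_notT not_mus => npre.
  split; first by rewrite occ_cons (negbTE npre) occ1.
  by move=> u inf_u lt_uw; rewrite occ_cons (leq_trans (minS u inf_u lt_uw)) ?leq_addl.
by rewrite occ_cons pre occ1.
Qed.

Lemma sqp_of_cons w : mus S w -> prefix w (a :: S) -> occ (a :: S) w = 2 ->
  sqp_of (a :: S) = w.
Proof.
case=> occ1 minS pre occ2.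
have w_gt0 : 0 < size w by case: w occ1 {minS pre occ2} => //; rewrite occ_nil; lia.
apply: sqp_of_eq => //; first by rewrite occ2.
move=> k /andP[_ lt_kw].
have pre_k : prefix (take k w) (a :: S) := prefix_trans (prefix_take w k) pre.
have -> : take k (a :: S) = take k w.
  by move: pre_k; rewrite prefixE size_take lt_kw => /eqP.
rewrite occ_cons pre_k add1n ltnS minS ?size_take ?lt_kw //.
exact/prefixW/prefix_take.
Qed.

Lemma mus_sqp_of : occ (a :: S) (sqp_of (a :: S)) = 2 -> mus S (sqp_of (a :: S)).
Proof.
set w := sqp_of _ => occ2; have pre : prefix w (a :: S) := sqp_of_prefix _.
have occ1 : occ S w = 1 by move: occ2; rewrite occ_cons pre; lia.
split=> // u /infixP[x [y def_w]] lt_uw.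
have [/size0nil-> | u_gt0] := posnP (size u); first by rewrite occ_nil ltnS.
case: x def_w => [|c x] def_w.
  have pre_u : prefix u (a :: S).
    by apply: prefix_trans pre; rewrite def_w prefix_prefix.
  have def_u : take (size u) (a :: S) = u by apply/eqP; rewrite -prefixE.
  have := @sqp_of_min (a :: S) (size u); rewrite u_gt0 lt_uw def_u occ_cons pre_u.
  by move=> /(_ isT); rewrite add1n.
have [p occ_p] : exists p, prefix w (drop p S) by apply: occ_gt0P; rewrite occ1.
have occ_x : prefix u (drop (0 + size x) S).
  apply: (prefix_drop_cat (y := y)); rewrite drop0.
  by move: pre; rewrite def_w prefix_cons => /andP[].
have occ_cx : prefix u (drop (p + size (c :: x)) S).
  by apply: (prefix_drop_cat (y := y)); rewrite -def_w.
by apply: occ_ge2 occ_x occ_cx _ => //=; lia.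
Qed.

Lemma mus_consP w : (~ mus (a :: S) w /\ mus S w) <->
  (w = sqp_of (a :: S) /\ occ (a :: S) (sqp_of (a :: S)) = 2).
Proof.
split=> [[not_mus mus_w] | [-> occ2]].
  have [pre occ2] := not_mus_cons mus_w not_mus.
  by rewrite (sqp_of_cons mus_w pre occ2).
by split; [case; rewrite occ2 | exact: mus_sqp_of].
Qed.

End ExtendLeft.

Lemma size_substr T i j : 0 < i -> j <= size T -> size (substr T i j) = j.+1 - i.
Proof. by move=> i_gt0 le_jT; rewrite size_take size_drop; case: ltnP; lia. Qed.

Lemma substr_predl T i j : 1 < i -> i <= j.+1 -> j <= size T ->
  exists a, substr T i.-1 j = a :: substr T i j.
Proof.
move=> i_gt1 le_ij le_jT; rewrite /substr.
have -> : j.+1 - i.-1 = (j.+1 - i).+1 by lia.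
have -> : i.-1 = i.-2.+1 by lia.
case def_s: (drop i.-2 T) => [|a s].
  by move: def_s => /(congr1 size); rewrite size_drop /=; lia.
by exists a; rewrite -[i.-2.+1]add1n -drop_drop def_s /= drop0.
Qed.

End Strings.

Theorem lemma17 (A : eqType) (T : seq A) (i j s t : nat) :
  1 < i -> i <= j -> j <= size T -> i <= s -> s <= t -> t <= j ->
  ((~ isMUS T i.-1 j s t /\ isMUS T i j s t) <->
   (substr T s t = sqp T i.-1 j /\ occ (substr T i.-1 j) (sqp T i.-1 j) = 2)).
Proof.
move=> i_gt1 le_ij le_jT le_is le_st le_tj.
have [a def_S] := substr_predl i_gt1 (leqW le_ij) le_jT.
have S_gt0 : 0 < size (substr T i j) by rewrite size_substr //; lia.
have le_i1s : i.-1 <= s by lia.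
by rewrite sqpE !isMUSE // def_S; apply: mus_consP.
Qed.
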